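(* For the reduction instance $NTP([a_j]_{j\in A},W)$, the optimal value satisfies $B(S^* )=W$ if and only if there exists $A^*\subseteq A$ with $\sum_{j\in A^*}a_j=W$.
   Context: Reduction instance. Let $N\ge1$, $A=\{1,\dots,N\}$, positive integers $a_1,\dots,a_N$, positive integer $W\le\sum_{j\in A}a_j$. Set $M=N+\sum_{j\in A}a_j+1$, employees $\mathcal E=\{1,\dots,M\}$ (smaller index = more senior). For $k\in A$: $i_k=k+\sum_{j=1}^{k-1}a_j$ (critical employees), $\mathcal E^S_k=\{i: i_k<i\le i_k+a_k\}$ (stable block). Response delays: $r_{i_k}=\sum_{j=1}^{k}a_j$; for $i\in\mathcal E^S_k$, $r_i=\sum_{j=1}^{k-1}a_j$; $r_M=\sum_{j\in A}a_j$. Let $C^*_0=2\sum_j a_j$ and $H=C^*_0-W$. A schedule $S=(s_i,e_i)_{i\in\mathcal E}$ has $s_i\ge0$, $e_i=s_i+r_i$; it is feasible if $s_1\le\dots\le s_M$ and $e_i\le H$ for all $i$. $b_i=|\{j: i<j,\ e_j<e_i\}|$, $B(S)=\sum_i b_i$. $S^*$ denotes an optimal schedule, i.e. a feasible schedule minimizing $B(S)$. *)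

From mathcomp Require Import all_boot all_order all_algebra.
Set Implicit Arguments. Unset Strict Implicit. Unset Printing Implicit Defensive.
Import Order.TTheory GRing.Theory Num.Theory.

Section NTP.
Variable (N : nat) (a : nat -> nat) (W : nat).
(* Items are j = 1..N, with sizes a j; employees are i = 1..M. *)

Definition psum (k : nat) : nat := \sum_(1 <= j < k.+1) a j.
Definition total_size : nat := psum N.
Definition M : nat := N + total_size + 1.
Definition crit (k : nat) : nat := k + psum k.-1.
Definition in_stable (k i : nat) : bool := (crit k < i) && (i <= crit k + a k).

(* response delays r_i; the critical employees and stable blocks are
   pairwise disjoint and together with M cover 1..M, so exactly one
   summand (or the M-branch) contributes. *)
Definition delay (i : nat) : nat :=
  if i == M then total_size
  else \sum_(1 <= k < N.+1)
         (if i == crit k then psum k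
          else if in_stable k i then psum k.-1 else 0).

Definition H : nat := 2 * total_size - W.

Section Sched.
Variable R : realFieldType.
Local Open Scope ring_scope.

(* a schedule is given by its start times s_i (i = 1..M); e_i = s_i + r_i *)
Definition finish (s : nat -> R) (i : nat) : R := s i + (delay i)%:R.

Definition feasible (s : nat -> R) : Prop :=
  (forall i, (1 <= i <= M)%N -> 0 <= s i) /\
  (forall i, (1 <= i < M)%N -> s i <= s i.+1) /\
  (forall i, (1 <= i <= M)%N -> finish s i <= (H%:R : R)).

Definition bcount (s : nat -> R) (i : nat) : nat :=
  (\sum_(i.+1 <= j < M.+1) nat_of_bool (finish s j < finish s i)%R)%N.

Definition Bval (s : nat -> R) : nat := (\sum_(1 <= i < M.+1) bcount s i)%N.

Definition optimal (s : nat -> R) : Prop :=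
  feasible s /\ forall s', feasible s' -> (Bval s <= Bval s')%N.
End Sched.
End NTP.

From mathcomp Require Import all_boot all_order all_algebra zify lra.
Import Order.TTheory GRing.Theory Num.Theory.
Set Implicit Arguments. Unset Strict Implicit. Unset Printing Implicit Defensive.

(* The critical employee i_k has delay psum k, while its stable block starts
   no earlier and has delay psum (k-1).  So either every employee of the block
   finishes before i_k (the block is inverted, contributing a_k to B), or the
   block pushes all later start times back by a_k.  Employee M has delay equal
   to the total size, so the deadline H = 2 total - W tolerates pushes of total
   size at most total - W: the inverted blocks have total size at least W, and
   B >= W for every feasible schedule, with B = W yielding a subset summing to
   W.  Conversely, given such a subset, delaying everybody after i_k by a_k for
   each block k outside the subset is feasible and inverts only the blocks of
   the subset, so B <= W. *)

Lemma sum_nat_eq0 m n (F : nat -> nat) :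
  (forall i, m <= i < n -> F i = 0) -> \sum_(m <= i < n) F i = 0.
Proof. by move=> F0; rewrite (eq_big_nat _ _ F0) sum_nat_const_nat muln0. Qed.

Lemma leq_sum_nat m n (F G : nat -> nat) :
  (forall i, m <= i < n -> F i <= G i) ->
  \sum_(m <= i < n) F i <= \sum_(m <= i < n) G i.
Proof.
move=> FG; rewrite big_nat_cond [X in _ <= X]big_nat_cond.
by apply: leq_sum => i /andP[/FG].
Qed.

Section Layout.
Variable a : nat -> nat.

Lemma psum0 : psum a 0 = 0.
Proof. by rewrite /psum big_geq. Qed.

Lemma psumS k : psum a k.+1 = psum a k + a k.+1.
Proof. by rewrite /psum big_nat_recr. Qed.

Lemma psum_pred k : 0 < k -> psum a k = psum a k.-1 + a k.
Proof. by case: k => // k _; rewrite psumS. Qed.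

Lemma psum_mono : {homo psum a : m n / m <= n}.
Proof.
move=> m n mn; rewrite [X in _ <= X]/psum (@big_cat_nat _ _ _ m.+1) //=.
exact: leq_addr.
Qed.

Lemma crit1 : crit a 1 = 1.
Proof. by rewrite /crit psum0. Qed.

Lemma critS k : 0 < k -> crit a k.+1 = crit a k + a k + 1.
Proof. by case: k => // k _; rewrite /crit /= psumS; lia. Qed.

Lemma crit_mono : {homo crit a : m n / m <= n}.
Proof. by move=> m n mn; rewrite /crit; have := @psum_mono m.-1 n.-1; lia. Qed.

Lemma crit_ltW m n : crit a m < crit a n -> m < n.
Proof. by apply: contraTT; rewrite -!leqNgt => /crit_mono. Qed.

Lemma crit_block n j : 1 <= j < crit a n.+1 ->
  exists2 k, 1 <= k <= n & crit a k <= j < crit a k.+1.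
Proof.
elim: n => [|n IH]; first by rewrite crit1; lia.
case: (ltnP j (crit a n.+1)) => jn jb; last by exists n.+1 => //; lia.
by have [k kn jk] := IH ltac:(lia); exists k => //; lia.
Qed.

Lemma sum_over_blocks n (F : nat -> nat) :
  \sum_(1 <= i < crit a n.+1) F i =
  \sum_(1 <= k < n.+1) \sum_(crit a k <= i < crit a k.+1) F i.
Proof.
elim: n => [|n IH]; first by rewrite crit1 !big_geq.
have c1 : 1 <= crit a n.+1 by rewrite /crit; lia.
rewrite (@big_cat_nat _ _ _ (crit a n.+1)) //= ?crit_mono //.
by rewrite IH [in RHS]big_nat_recr.
Qed.

End Layout.

Section Delays.
Variables (N : nat) (a : nat -> nat).

Lemma crit_last : crit a N.+1 = M N a.
Proof. by rewrite /crit /M /total_size /=; lia. Qed.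

Lemma crit_le_last k : k <= N.+1 -> crit a k <= M N a.
Proof. by rewrite -crit_last => /crit_mono. Qed.

Lemma crit_block_inj k k' j :
  crit a k <= j < crit a k.+1 -> crit a k' <= j < crit a k'.+1 -> k = k'.
Proof.
move=> /andP[jk kj] /andP[jk' k'j].
have := @crit_ltW a k k'.+1 ltac:(lia); have := @crit_ltW a k' k.+1 ltac:(lia).
lia.
Qed.

Lemma delay_block k j : 1 <= k <= N -> crit a k <= j < crit a k.+1 ->
  delay N a j = if j == crit a k then psum a k else psum a k.-1.
Proof.
move=> kN jk.
have jM : j != M N a by have := @crit_le_last k.+1; lia.
have kr : k \in index_iota 1 N.+1 by rewrite mem_index_iota; lia.
rewrite /delay (negbTE jM) (bigD1_seq k) ?iota_uniq //= big1_seq ?addn0.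
  rewrite /in_stable; case: eqP => // /eqP jc.
  by rewrite ifT //; move: jk; rewrite critS; lia.
move=> k' /andP[k'k]; rewrite mem_index_iota => k'N.
have ck' : crit a k'.+1 = crit a k' + a k' + 1 by apply: critS; lia.
rewrite /in_stable.
case: eqP => [jc|_]; first by have := @crit_block_inj k k' j jk; lia.
case: ifP => // js; have := @crit_block_inj k k' j jk; lia.
Qed.

Lemma delay_crit k : 1 <= k <= N -> delay N a (crit a k) = psum a k.
Proof. by move=> kN; rewrite (delay_block kN) ?eqxx // critS; lia. Qed.

Lemma delay_stable k j : 1 <= k <= N -> crit a k < j < crit a k.+1 ->
  delay N a j = psum a k.-1.
Proof. by move=> kN jk; rewrite (delay_block kN) ?ifF; lia. Qed.

Lemma delay_last : delay N a (M N a) = total_size N a.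
Proof. by rewrite /delay eqxx. Qed.

Lemma delay_ge_psum k j : k <= N -> crit a k.+1 <= j <= M N a ->
  psum a k <= delay N a j.
Proof.
move=> kN jk; have [->|jM] := eqVneq j (M N a).
  by rewrite delay_last; apply: psum_mono.
have j1 : 1 <= crit a k.+1 by rewrite -(crit1 a) crit_mono.
have [k' k'N jk'] := @crit_block a N j ltac:(rewrite crit_last; lia).
have kk' : k.+1 < k'.+1 by apply: (@crit_ltW a); lia.
rewrite (delay_block _ jk') //.
have := @psum_mono a k k'.-1; have := @psum_mono a k'.-1 k'; case: eqP; lia.
Qed.

Lemma delay_after k j : 1 <= k <= N -> crit a k < j <= M N a ->
  psum a k.-1 <= delay N a j.
Proof.
move=> kN jk; case: (ltnP j (crit a k.+1)) => jk1.
  by rewrite (delay_stable kN) //; lia.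
have := @delay_ge_psum k j; have := @psum_mono a k.-1 k; lia.
Qed.

Lemma delay_le_total j : 1 <= j <= M N a -> delay N a j <= total_size N a.
Proof.
move=> jM; have [->|jM'] := eqVneq j (M N a); first by rewrite delay_last.
have [k kN jk] := @crit_block a N j ltac:(rewrite crit_last; lia).
rewrite (delay_block _ jk) //.
have := @psum_mono a k N; have := @psum_mono a k.-1 k; rewrite /total_size.
case: eqP; lia.
Qed.

End Delays.

Lemma total_size_split N a (P : pred nat) : total_size N a =
  \sum_(1 <= k < N.+1 | P k) a k + \sum_(1 <= k < N.+1 | ~~ P k) a k.
Proof. exact: bigID. Qed.

Section Schedules.
Variables (N : nat) (a : nat -> nat) (W : nat) (R : realFieldType).
Local Open Scope ring_scope.
Implicit Type s : nat -> R.

Lemma Bval_blocks s : Bval N a s =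
  (\sum_(1 <= k < N.+1) \sum_(crit a k <= i < crit a k.+1) bcount N a s i)%N.
Proof.
rewrite /Bval big_nat_recr /=; last by rewrite /M; lia.
by rewrite [bcount _ _ _ _]big_geq // addn0 -(crit_last N a) sum_over_blocks.
Qed.

Lemma feasible_start_mono s : feasible N a W s ->
  forall i j, (1 <= i)%N -> (i <= j <= M N a)%N -> s i <= s j.
Proof.
move=> [_ [s_mono _]] i j i1; elim: j => [|j IH] ijM; first lia.
have [->//|ij] := eqVneq i j.+1.
by apply: le_trans (IH _) (s_mono j _); lia.
Qed.

End Schedules.

Section LowerBound.
Variables (N : nat) (a : nat -> nat) (W : nat) (R : realFieldType).
Hypothesis a_pos : forall k, (1 <= k <= N)%N -> (0 < a k)%N.
Variable s : nat -> R.
Hypothesis s_feasible : feasible N a W s.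
Local Open Scope ring_scope.

(* [crit a k + a k] is the last employee of the stable block of [k]. *)
Definition block_inverted k : bool :=
  finish N a s (crit a k + a k) < finish N a s (crit a k).

Lemma block_inverted_bcount k : (1 <= k <= N)%N -> block_inverted k ->
  (a k <= bcount N a s (crit a k))%N.
Proof.
move=> kN inv; have ak := a_pos kN.
have ck : crit a k.+1 = (crit a k + a k + 1)%N by apply: critS; lia.
have cM : (crit a k.+1 <= M N a)%N by apply: crit_le_last; lia.
rewrite /bcount (@big_cat_nat _ _ _ (crit a k.+1)) /=; [|lia|lia].
apply: leq_trans (leq_addr _ _).
apply: (@leq_trans (\sum_((crit a k).+1 <= j < crit a k.+1) 1)).
  by rewrite sum_nat_const_nat ck; lia.
apply: leq_sum_nat => j jk; rewrite lt0b.
have sj : s j <= s (crit a k + a k).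
  by apply: feasible_start_mono s_feasible _ _ _ _; lia.
have dj : delay N a j = psum a k.-1 by apply: (delay_stable kN); lia.
move: inv; rewrite /block_inverted /finish dj (delay_stable kN); last lia.
lra.
Qed.

Lemma sum_inverted_le_Bval :
  (\sum_(1 <= k < N.+1 | block_inverted k) a k <= Bval N a s)%N.
Proof.
rewrite Bval_blocks big_mkcond; apply: leq_sum_nat => k kN.
have ck : (crit a k < crit a k.+1)%N by rewrite critS; lia.
rewrite big_ltn //; apply: leq_trans (leq_addr _ _).
by case: ifP => // /block_inverted_bcount; apply.
Qed.

Lemma start_next_crit k : (1 <= k <= N)%N ->
  s (crit a k) + (if block_inverted k then 0 else a k)%:R <= s (crit a k.+1).
Proof.
move=> kN; have ck : crit a k.+1 = (crit a k + a k + 1)%N by apply: critS; lia.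
have cM : (crit a k.+1 <= M N a)%N by apply: crit_le_last; lia.
have c1 : (1 <= crit a k)%N by rewrite /crit; lia.
have s_last : s (crit a k + a k) <= s (crit a k.+1).
  by apply: feasible_start_mono s_feasible _ _ _ _; lia.
case: ifP => [_|/negbT]; last rewrite /block_inverted /finish -leNgt.
  rewrite addr0; apply: le_trans s_last.
  by apply: feasible_start_mono s_feasible _ _ _ _; lia.
have ak := a_pos kN.
have pk : psum a k = (psum a k.-1 + a k)%N by apply: psum_pred; lia.
rewrite delay_crit // (delay_stable kN) ?pk ?natrD; [lra|lia].
Qed.

Lemma start_last_ge :
  s 1 + (\sum_(1 <= k < N.+1 | ~~ block_inverted k) a k)%:R <= s (M N a).
Proof.
rewrite -crit_last; suff : forall n, (n <= N)%N ->
    s 1 + (\sum_(1 <= k < n.+1 | ~~ block_inverted k) a k)%:R <= s (crit a n.+1).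
  by apply.
elim=> [|n IH] nN; first by rewrite big_geq // crit1 addr0.
rewrite big_mkcond big_nat_recr //= -big_mkcond natrD addrA.
apply: le_trans (start_next_crit _); last lia.
apply: lerD; first by apply: IH; lia.
by case: (block_inverted _).
Qed.

Lemma W_le_sum_inverted : (W <= total_size N a)%N ->
  (W <= \sum_(1 <= k < N.+1 | block_inverted k) a k)%N.
Proof.
have [s_nonneg [_ s_fin]] := s_feasible.
have s1 := s_nonneg 1%N ltac:(rewrite /M; lia).
have sM := s_fin (M N a) ltac:(rewrite /M; lia).
move: sM (start_last_ge); rewrite /finish delay_last => sM sM_ge.
have : ((\sum_(1 <= k < N.+1 | ~~ block_inverted k) a k + total_size N a)%:R
          <= (H N a W)%:R :> R) by rewrite natrD; lra.
by rewrite ler_nat /H (total_size_split _ _ block_inverted); lia.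
Qed.

End LowerBound.

Section SubsetSchedule.
Variables (N : nat) (a : nat -> nat) (R : realFieldType).
Variable P : pred nat.

Definition subset_shift i : nat :=
  \sum_(1 <= k < N.+1 | ~~ P k && (crit a k < i)) a k.

Definition subset_schedule i : R := (subset_shift i)%:R.

Lemma subset_shift_mono : {homo subset_shift : i j / i <= j}.
Proof.
move=> i j ij; rewrite /subset_shift big_mkcond [X in _ <= X]big_mkcond.
apply: leq_sum_nat => k _; case: (P k) => //=.
by case: (crit a k < i) /idP; case: (crit a k < j) /idP => //=; lia.
Qed.

Lemma subset_shift_le i : subset_shift i <= \sum_(1 <= k < N.+1 | ~~ P k) a k.
Proof.
rewrite /subset_shift big_mkcond [X in _ <= X]big_mkcond.
by apply: leq_sum_nat => k _; case: (P k) => //=; case: ifP.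
Qed.

Lemma subset_shift_jump k j : 1 <= k <= N -> ~~ P k -> crit a k < j ->
  subset_shift (crit a k) + a k <= subset_shift j.
Proof.
move=> kN Pk kj; rewrite /subset_shift.
have kr : k \in index_iota 1 N.+1 by rewrite mem_index_iota; lia.
rewrite big_mkcond [X in _ <= X]big_mkcond.
rewrite !(bigD1_seq k) ?iota_uniq //= Pk ltnn kj add0n addnC leq_add2l.
apply: leq_sum => k' _.
case: (P k'); rewrite ?andbF //=.
by case: (crit a k' < crit a k) /idP; case: (crit a k' < j) /idP => //=; lia.
Qed.

Lemma finish_subset_schedule i :
  finish N a subset_schedule i = (subset_shift i + delay N a i)%:R%R.
Proof. by rewrite /finish /subset_schedule natrD. Qed.

Lemma subset_schedule_feasible W : \sum_(1 <= k < N.+1 | P k) a k = W ->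
  feasible N a W subset_schedule.
Proof.
move=> PW; split; first by move=> i _; rewrite /subset_schedule ler0n.
split; first by move=> i _; rewrite /subset_schedule ler_nat subset_shift_mono.
move=> i iM; rewrite finish_subset_schedule ler_nat /H.
have := subset_shift_le i; have := delay_le_total iM.
by rewrite (total_size_split _ _ P) PW; lia.
Qed.

Lemma subset_finish_ltF i j :
  subset_shift i + delay N a i <= subset_shift j + delay N a j ->
  (finish N a subset_schedule j < finish N a subset_schedule i)%R = false.
Proof. by rewrite !finish_subset_schedule ltr_nat ltnNge => ->. Qed.

Lemma bcount_subset_stable k i : 1 <= k <= N -> crit a k < i < crit a k.+1 ->
  bcount N a subset_schedule i = 0.
Proof.
move=> kN ik; apply: sum_nat_eq0 => j ij; rewrite subset_finish_ltF //.
have := delay_after kN (_ : crit a k < j <= M N a).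
have := @subset_shift_mono i j; rewrite (delay_stable kN ik); lia.
Qed.

Lemma bcount_subset_crit k : 1 <= k <= N ->
  bcount N a subset_schedule (crit a k) <= (if P k then a k else 0).
Proof.
move=> kN; have ck : crit a k.+1 = crit a k + a k + 1 by apply: critS; lia.
have cM : crit a k.+1 <= M N a by apply: crit_le_last; lia.
have dc := delay_crit a kN.
rewrite /bcount (@big_cat_nat _ _ _ (crit a k.+1)) /=; [|lia|lia].
rewrite [X in _ + X]sum_nat_eq0 ?addn0 => [|j jk]; last first.
  rewrite subset_finish_ltF // dc.
  by have := @delay_ge_psum N a k j; have := @subset_shift_mono (crit a k) j; lia.
case: ifP => Pk.
  apply: (@leq_trans (\sum_((crit a k).+1 <= j < crit a k.+1) 1)).
    by apply: leq_sum => j _; apply: leq_b1.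
  by rewrite sum_nat_const_nat; lia.
rewrite sum_nat_eq0 // => j jk; rewrite subset_finish_ltF // dc (delay_stable kN jk).
have pk : psum a k = psum a k.-1 + a k by apply: psum_pred; lia.
by have := @subset_shift_jump k j kN (negbT Pk); lia.
Qed.

Lemma Bval_subset_schedule_le :
  Bval N a subset_schedule <= \sum_(1 <= k < N.+1 | P k) a k.
Proof.
rewrite Bval_blocks [X in _ <= X]big_mkcond; apply: leq_sum_nat => k kN.
have ck : crit a k < crit a k.+1 by rewrite critS; lia.
rewrite big_ltn // sum_nat_eq0 ?addn0 => [|i ik]; first exact: bcount_subset_crit.
by apply: (bcount_subset_stable kN); lia.
Qed.

End SubsetSchedule.

Theorem theorem2 (R : realFieldType) (N : nat) (a : nat -> nat) (W : nat)
  (hN : (1 <= N)%N)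
  (ha : forall j, (1 <= j <= N)%N -> (0 < a j)%N)
  (hW0 : (0 < W)%N) (hW : (W <= total_size N a)%N)
  (s : nat -> R) (hopt : optimal N a W s) :
  Bval N a s = W <->
  exists P : pred nat, (\sum_(1 <= j < N.+1 | P j) a j)%N = W.
Proof.
have [s_feasible s_min] := hopt.
have inverted_le_B := sum_inverted_le_Bval ha s_feasible.
have W_le_inverted := W_le_sum_inverted ha s_feasible hW.
split=> [B_W | [P PW]]; first by exists (block_inverted N a s); lia.
have := s_min _ (subset_schedule_feasible R PW).
have := Bval_subset_schedule_le N a R P.
lia.
Qed.
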